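(* Let $f^*$ be any maximum flow in $\mathcal{H}$ and $\mathcal{H}_{f^*}$ the residual graph. Let $V_1$ be a nonempty subset of $V$, $\Lambda_1=\{\lambda\in\Lambda:\lambda\subseteq V_1\}$, and $\mathcal{S}=\{s\}\cup V_1\cup\Lambda_1$. The following are equivalent: (1) $V_1$ induces an $h$-clique densest subgraph of $G$, i.e. $\rho_h(V_1)=\rho_h^*$; (2) $(\mathcal{S},V_\mathcal{H}\setminus\mathcal{S})$ is a minimum $s$-$t$ cut of $\mathcal{H}$; (3) there is no arc in $\mathcal{H}_{f^*}$ from a node of $\mathcal{S}$ to a node of $V_\mathcal{H}\setminus\mathcal{S}$.
   Context: Let $G=(V,E)$ be a finite simple undirected graph and $h\ge2$. An $h$-clique is a set of $h$ pairwise adjacent nodes; $\mu_h(G[W])$ counts $h$-cliques inside $W$; for nonempty $W$, $\rho_h(W)=\mu_h(G[W])/|W|$; $\rho_h^*=\max_{\emptyset\ne W\subseteq V}\rho_h(W)$; $deg_G(v,h)$ is the number of $h$-cliques containing $v$; $\Lambda$ is the set of $(h-1)$-cliques of $G$ contained in some $h$-clique. Flow network $\mathcal{H}=(V_\mathcal{H},E_\mathcal{H},c)$: $V_\mathcal{H}=V\cup\Lambda\cup\{s,t\}$; for $v\in V$: arcs $(s,v)$ cap. $deg_G(v,h)$, $(v,t)$ cap. $h\rho_h^*$, $(v,s),(t,v)$ cap. $0$; for $\lambda\in\Lambda$, $v\in\lambda$: $(\lambda,v)$ cap. $+\infty$, $(v,\lambda)$ cap. $0$; for $\lambda\in\Lambda$,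 $v\in V$ with $\lambda\cup\{v\}$ an $h$-clique: $(v,\lambda)$ cap. $1$, $(\lambda,v)$ cap. $0$; no other arcs. A flow $f$ assigns reals to arcs with $f(u,v)\le c(u,v)$, $f(v,u)=-f(u,v)$, and conservation at every node other than $s,t$; its value is $\sum_v f(s,v)$. The residual graph $\mathcal{H}_{f}$ is the directed graph on $V_\mathcal{H}$ having an arc $(u,v)$ whenever $(u,v)\in E_\mathcal{H}$ and $c(u,v)-f(u,v)>0$. Cut capacities are sums of capacities of arcs from $\mathcal{S}$ to its complement. *)

From HB Require Import structures.
From mathcomp Require Import all_boot all_order all_algebra.
From mathcomp Require Import reals constructive_ereal.
Set Implicit Arguments. Unset Strict Implicit. Unset Printing Implicit Defensive.
Import Order.TTheory GRing.Theory Num.Theory.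

Section Graph.
Variables (T : finType) (e : rel T).

Definition is_clique (A : {set T}) : bool :=
  [forall x in A, forall y in A, (x != y) ==> e x y].

Definition hclique (h : nat) (A : {set T}) : bool := is_clique A && (#|A| == h).

Definition mu (h : nat) (W : {set T}) : nat :=
  #|[set A : {set T} | hclique h A & A \subset W]|.

Definition hdeg (h : nat) (v : T) : nat :=
  #|[set A : {set T} | hclique h A & v \in A]|.

Definition Lam (h : nat) : {set {set T}} :=
  [set L : {set T} | hclique h.-1 L & [exists A : {set T}, hclique h A && (L \subset A)]].

Section Real.
Variable R : realType.
Local Open Scope ring_scope.

Definition rho (h : nat) (W : {set T}) : R := (mu h W)%:R / #|W|%:R.

Definition rho_star (h : nat) : R :=
  \big[Num.max/0]_(W : {set T} | W != set0) rho h W.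
End Real.
End Graph.

(* Nodes of the flow network: s, t, a node for each v in V, a node for each
   set of vertices; only the sets in Lambda are nodes of V_H (see VH). *)
Inductive node (T : finType) := Src | Snk | Vx of T | Lm of {set T}.
Arguments Src {T}. Arguments Snk {T}.

Definition node_enc (T : finType) (n : node T) : option bool + (T + {set T}) :=
  match n with
  | Src => inl (Some true) | Snk => inl (Some false)
  | Vx v => inr (inl v) | Lm l => inr (inr l) end.
Definition node_dec (T : finType) (x : option bool + (T + {set T})) : node T :=
  match x with
  | inl (Some true) => Src | inl _ => Snk
  | inr (inl v) => Vx v | inr (inr l) => Lm l end.
Lemma node_encK (T : finType) : cancel (@node_enc T) (@node_dec T).
Proof. by case. Qed.
HB.instance Definition _ (T : finType) := Finite.copy (node T) (can_type (@node_encK T)).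

Section Network.
Variables (T : finType) (e : rel T) (h : nat) (R : realType).
Local Open Scope ring_scope.

Definition VH : {set node T} :=
  [set Src; Snk] :|: ([set Vx v | v : T] :|: [set Lm l | l in Lam e h]).

Definition isarc (u w : node T) : bool :=
  match u, w with
  | Src, Vx _ | Vx _, Src | Vx _, Snk | Snk, Vx _ => true
  | Lm l, Vx v | Vx v, Lm l =>
      (l \in Lam e h) && ((v \in l) || hclique e h (v |: l))
  | _, _ => false
  end.

Local Open Scope ereal_scope.
(* capacities (only meaningful on arcs) *)
Definition cap (u w : node T) : \bar R :=
  match u, w with
  | Src, Vx v => ((hdeg e h v)%:R)%:E
  | Vx _, Snk => ((h%:R * rho_star e R h)%R)%:E
  | Lm l, Vx v => if v \in l then +oo else 0
  | Vx v, Lm l => if hclique e h (v |: l) then 1 else 0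
  | _, _ => 0
  end.

Definition is_flow (f : node T -> node T -> R) : Prop :=
  (forall u w, isarc u w -> (f u w)%:E <= cap u w /\ f w u = (- f u w)%R) /\
  (forall u, u \in VH -> u != Src -> u != Snk ->
     (\sum_(w | isarc u w) f u w)%R = 0%R).

Definition flow_value (f : node T -> node T -> R) : R :=
  (\sum_(v | isarc Src v) f Src v)%R.

Definition is_max_flow (f : node T -> node T -> R) : Prop :=
  is_flow f /\ forall g, is_flow g -> (flow_value g <= flow_value f)%R.

Definition resarc (f : node T -> node T -> R) (u w : node T) : bool :=
  isarc u w && ((f u w)%:E < cap u w).

Definition is_st_cut (S : {set node T}) : Prop :=
  [/\ S \subset VH, Src \in S & Snk \notin S].

Definition cut_cap (S : {set node T}) : \bar R :=
  \sum_(u in S) \sum_(w in VH :\: S | isarc u w) cap u w.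

Definition is_min_cut (S : {set node T}) : Prop :=
  is_st_cut S /\ forall S', is_st_cut S' -> cut_cap S <= cut_cap S'.

Definition Sset (V1 : {set T}) : {set node T} :=
  Src |: ([set Vx v | v in V1] :|: [set Lm l | l in [set l in Lam e h | l \subset V1]]).
End Network.

From Pilot Require Import Defs.
From HB Require Import structures.
From mathcomp Require Import all_boot all_order all_algebra.
From mathcomp Require Import reals constructive_ereal.
From mathcomp Require Import ring lra zify.
Set Implicit Arguments. Unset Strict Implicit. Unset Printing Implicit Defensive.
Import Order.TTheory GRing.Theory Num.Theory.
Local Open Scope ring_scope.

(* Write D = sum_v deg_G(v,h) for the capacity of the source arcs.  For a
   nonempty V1 the cut S(V1) = {s} u V1 u Lambda_1 has capacity
       cap S(V1) = D + h (|V1| rho_h^* - mu_h(V1)),                    (1)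
   since the arcs leaving it are the source arcs to V \ V1, the sink arcs
   from V1, and one unit arc (v, lambda) for every h-clique through v in V1
   not contained in V1.  Every s-t cut costs at least D: an infinite arc
   leaves it, or it is "closed" and costs at least the cut induced by its
   vertex set, which is >= D by (1) and mu_h(W) <= |W| rho_h^*.  As S(set0)
   costs D, the minimum cut capacity is D, and by the max-flow min-cut
   argument (an s-t path in the residual graph augments the flow, so the
   residual-reachable set is a saturated cut) so is the value of f^*.
   Hence all three statements are equivalent to cap S(V1) = D: (1) by (1),
   (2) by definition, (3) since a cut has no outgoing residual arc iff its
   capacity equals the flow value. *)

Section ArcCounting.
Variables (N : finType) (r : rel N).

Lemma path_zip_arcs (x : N) (p : seq N) :
  path r x p -> {in zip (x :: p) p, forall q, r q.1 q.2}.
Proof.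
elim: p x => [//|y p IH] x /= /andP[rxy pth] q; rewrite in_cons => /orP[/eqP->//|].
exact: IH.
Qed.

(* Flow balance of a walk: every node is left as often as it is entered,
   except the first one (one extra exit) and the last one (one extra entry). *)
Lemma zip_balance (x : N) (p : seq N) (u : N) :
  (count (fun q : N * N => q.1 == u) (zip (x :: p) p) + (last x p == u) =
   (x == u) + count (fun q : N * N => q.2 == u) (zip (x :: p) p))%N.
Proof. by elim: p x => [|y p IH] x /=; [rewrite addn0 | rewrite -addnA IH addnCA]. Qed.

Lemma arc_count_out (s : seq (N * N)) (u : N) : {in s, forall q, r q.1 q.2} ->
  (\sum_(w | r u w) count (pred1 (u, w)) s = count (fun q => q.1 == u) s)%N.
Proof.
elim: s => [|[a b] s IH] s_arcs /=; first by rewrite big1.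
rewrite big_split /= IH; last by move=> q qs; apply: s_arcs; rewrite in_cons qs orbT.
congr (_ + _)%N; have rab : r a b by apply: (s_arcs (a, b)); rewrite in_cons eqxx.
case: (a =P u) => [<-|ne]; last by rewrite big1 // => w _; rewrite xpair_eqE; case: (a =P u).
rewrite (bigD1 b) //= eqxx big1 ?addn0 // => w /andP[_ wb].
by rewrite xpair_eqE eqxx /= eq_sym (negbTE wb).
Qed.
End ArcCounting.

(* The same count for arcs entering u, obtained by reversing all arcs. *)
Lemma arc_count_in (N : finType) (r : rel N) (s : seq (N * N)) (u : N) :
  {in s, forall q, r q.1 q.2} ->
  (\sum_(w | r w u) count (pred1 (w, u)) s = count (fun q => q.2 == u) s)%N.
Proof.
move=> s_arcs; pose swap (q : N * N) := (q.2, q.1).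
have swap_arcs : {in map swap s, forall q, [rel x y | r y x] q.1 q.2}.
  by move=> _ /mapP[q qs ->]; apply: s_arcs.
have -> : count (fun q => q.2 == u) s = count (fun q => q.1 == u) (map swap s).
  by rewrite count_map.
rewrite -(@arc_count_out N [rel x y | r y x] _ u swap_arcs); apply: eq_bigr => w _.
by rewrite count_map; apply: eq_count => -[a b]; rewrite /= !xpair_eqE andbC.
Qed.

Section Cliques.
Variables (R : realType) (T : finType) (e : rel T) (h : nat).
Hypothesis h_ge2 : (2 <= h)%N.

Definition outer_cliques (W : {set T}) (v : T) : {set {set T}} :=
  [set l in Lam e h | ~~ (l \subset W) && hclique e h (v |: l)].

Lemma clique_sub (A B : {set T}) : is_clique e A -> B \subset A -> is_clique e B.
Proof.
move=> /forall_inP cA BA; apply/forall_inP => x xB; apply/forall_inP => y yB.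
by have /forall_inP := cA x (subsetP BA x xB); apply; apply: (subsetP BA).
Qed.

(* The h-cliques through v \in W either lie inside W or are of the form
   v |: l for a unique outer (h-1)-clique l. *)
Lemma deg_split (W : {set T}) (v : T) : v \in W ->
  hdeg e h v = (#|[set A | hclique e h A & (v \in A) && (A \subset W)]| +
                #|outer_cliques W v|)%N.
Proof.
move=> vW; rewrite /hdeg -(cardID [set A : {set T} | A \subset W]); congr (_ + _)%N.
  by apply: eq_card => A; rewrite !inE andbA.
pose X := [set A : {set T} | hclique e h A & (v \in A) && ~~ (A \subset W)].
have -> : #|[predD [set A | hclique e h A & v \in A] & [set A : {set T} | A \subset W]]| = #|X|.
  by apply: eq_card => A; rewrite !inE andbC andbA.
have -> : outer_cliques W v = (fun A => A :\ v) @: X.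
  apply/setP => l; rewrite inE; apply/idP/imsetP.
    case/andP=> lL /andP[lW hc]; exists (v |: l).
      rewrite inE hc /= !inE eqxx /=; apply: contra lW => H.
      exact: subset_trans (subsetUr _ _) H.
    have vl : v \notin l.
      apply/negP => vl; move: hc lL; rewrite /hclique /Lam inE (setUidPr _) ?sub1set //.
      case/andP=> _ /eqP E /andP[/andP[_ /eqP]]; rewrite E; lia.
    by rewrite setU1K.
  case=> A; rewrite inE => /andP[hA /andP[vA AW]] ->.
  have vAK : v |: (A :\ v) = A by rewrite setD1K.
  rewrite vAK hA andbT; apply/andP; split; last first.
    by apply: contra AW => AvW; rewrite -vAK subUset sub1set vW AvW.
  rewrite /Lam inE; apply/andP; split; last by apply/existsP; exists A; rewrite hA subD1set.
  move: hA => /andP[cA /eqP cardA]; rewrite /hclique (clique_sub cA (subD1set _ _)) andTb.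
  by apply/eqP; have := cardsD1 v A; rewrite vA cardA; lia.
rewrite card_in_imset // => A B; rewrite !inE => /andP[_ /andP[vA _]] /andP[_ /andP[vB _]] E.
by rewrite -(setD1K vA) -(setD1K vB) E.
Qed.

(* Double counting: each h-clique inside W is counted once by each of its
   h vertices. *)
Lemma sum_in_clique (W : {set T}) :
  (\sum_(v in W) #|[set A | hclique e h A & (v \in A) && (A \subset W)]| =
   h * mu e h W)%N.
Proof.
pose M := [set A : {set T} | hclique e h A & A \subset W].
have E v : #|[set A | hclique e h A & (v \in A) && (A \subset W)]| =
           (\sum_(A in M) (v \in A : nat))%N.
  rewrite -sum1_card big_mkcond [RHS]big_mkcond; apply: eq_bigr => A _; rewrite !inE.
  by case: (hclique e h A); case: (v \in A); case: (A \subset W).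
under eq_bigr do rewrite E.
rewrite exchange_big /= /mu -/M (eq_bigr (fun _ => h)); first by rewrite sum_nat_const mulnC.
move=> A; rewrite inE => /andP[/andP[_ /eqP cA] AW]; rewrite -cA -sum1_card.
rewrite big_mkcond [RHS]big_mkcond; apply: eq_bigr => v _.
by case vA: (v \in A); [rewrite (subsetP AW _ vA) | case: (v \in W)].
Qed.

Lemma deg_sum_split (W : {set T}) :
  \sum_(v in W) (hdeg e h v)%:R =
  h%:R * (mu e h W)%:R + \sum_(v in W) (#|outer_cliques W v|%:R : R).
Proof.
rewrite (eq_bigr (fun v => (#|[set A | hclique e h A & (v \in A) && (A \subset W)]|%:R : R)
                          + #|outer_cliques W v|%:R)); last first.
  by move=> v vW; rewrite (deg_split vW) natrD.
by rewrite big_split /= -natr_sum sum_in_clique natrM.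
Qed.

Lemma rho_star_ge0 : 0 <= rho_star e R h.
Proof.
rewrite /rho_star; elim/big_ind: _ => // [x y x_ge0 _|W _]; first by rewrite le_max x_ge0.
by rewrite /rho divr_ge0 ?ler0n.
Qed.

Lemma rho_le (W : {set T}) : W != set0 -> rho e R h W <= rho_star e R h.
Proof. by move=> W0; rewrite /rho_star (bigD1 W) //= le_max lexx. Qed.

Lemma mu_set0 : mu e h set0 = 0%N.
Proof.
apply/eqP; rewrite cards_eq0; apply/eqP/setP => A; rewrite !inE subset0.
by apply/negP => /andP[/andP[_ /eqP cA] /eqP A0]; move: cA; rewrite A0 cards0; lia.
Qed.

Lemma mu_le (W : {set T}) : (mu e h W)%:R <= #|W|%:R * rho_star e R h.
Proof.
have [->|W0] := eqVneq W set0; first by rewrite mu_set0 cards0 !mul0r.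
by rewrite mulrC -ler_pdivrMr ?ltr0n ?card_gt0 //; apply: rho_le.
Qed.
End Cliques.

Lemma node_sum (T : finType) (M : nmodType) (F : node T -> M) :
  \sum_(u : node T) F u =
  F Src + F Snk + \sum_(v : T) F (Vx v) + \sum_(l : {set T}) F (Lm l).
Proof.
rewrite (reindex_onto (@node_dec T) (@node_enc T)); last by move=> i _; apply: node_encK.
rewrite big_sumType /= big_sumType /=.
under [X in _ + (X + _) = _]eq_bigl do rewrite eqxx.
under [X in _ + (_ + X) = _]eq_bigl do rewrite eqxx.
rewrite !addrA; congr (_ + _ + _).
rewrite big_mkcond /= (bigD1 (Some true)) //= (bigD1 (Some false)) //= big1 ?addr0 //.
by case=> [[]|].
Qed.

Section Network.
Variables (R : realType) (T : finType) (e : rel T) (h : nat).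
Local Notation N := (node T).
Local Notation isarc := (isarc e h).
Local Notation VH := (VH e h).
Local Notation cap := (cap e h R).

Lemma isarc_sym (u w : N) : isarc u w = isarc w u.
Proof. by case: u; case: w. Qed.

Lemma VH_Src : Src \in VH. Proof. by rewrite !inE eqxx. Qed.
Lemma VH_Snk : Snk \in VH. Proof. by rewrite !inE eqxx orbT. Qed.
Lemma VH_Vx (v : T) : Vx v \in VH. Proof. by rewrite !inE imset_f ?orbT. Qed.
Lemma VH_Lm (l : {set T}) : (Lm l \in VH) = (l \in Lam e h).
Proof.
rewrite /VH in_setU in_set2 in_setU /=; apply/idP/idP.
  by case/orP=> [/imsetP[v _ //]|/imsetP[l' Hl [->]]].
by move=> Hl; rewrite imset_f ?orbT.
Qed.

Lemma isarc_VH (u w : N) : isarc u w -> w \in VH.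
Proof.
case: w => [||v|l]; rewrite ?VH_Src ?VH_Snk ?VH_Vx //.
by case: u => //= v /andP[]; rewrite VH_Lm.
Qed.

Lemma cap_ge0 (u w : N) : (0 <= cap u w)%E.
Proof.
case: u => [||v|l]; case: w => [||v'|l'] //=; rewrite ?lee_fin ?ler0n //.
- by rewrite mulr_ge0 ?ler0n ?rho_star_ge0.
- by case: ifP.
- by case: ifP => _; rewrite ?leey.
Qed.

Section Flow.
Variable f : N -> N -> R.
Hypothesis f_flow : is_flow e h f.

Lemma flow_le_cap (u w : N) : isarc u w -> ((f u w)%:E <= cap u w)%E.
Proof. by move=> a; case: (f_flow.1 u w a). Qed.

(* Skew symmetry makes the net flow inside any node set vanish. *)
Lemma flow_inside (S : {set N}) :
  \sum_(u in S) \sum_(w in S | isarc u w) f u w = 0.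
Proof.
pose G u w := if isarc u w then f u w else 0.
have G_skew u w : G w u = - G u w.
  rewrite /G isarc_sym; case: ifP => a; last by rewrite oppr0.
  by rewrite (f_flow.1 u w a).2.
set X := LHS.
have XG : X = \sum_(u in S) \sum_(w in S) G u w.
  apply: eq_bigr => u _; rewrite big_mkcond [RHS]big_mkcond; apply: eq_bigr => w _.
  by rewrite /G; case: (isarc u w); case: (w \in S).
have : X = - X.
  rewrite {1}XG exchange_big /= XG -sumrN; apply: eq_bigr => u _.
  by rewrite -sumrN; apply: eq_bigr => w _; rewrite G_skew.
by move=> XN; lra.
Qed.

Lemma flow_cut (S : {set N}) : is_st_cut e h S ->
  flow_value e h f = \sum_(u in S) \sum_(w in VH :\: S | isarc u w) f u w.
Proof.
case=> SV sS tS.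
have out_S : \sum_(u in S) \sum_(w | isarc u w) f u w = flow_value e h f.
  rewrite (bigD1 Src) //= [X in _ + X]big1 ?addr0 // => u /andP[uS us].
  apply: f_flow.2 => //; first exact: (subsetP SV).
  by apply: contraNneq tS => <-.
rewrite -out_S.
under eq_bigr => u _ do rewrite (bigID (fun w => w \in S)) /=.
rewrite big_split /= [X in X + _](_ : _ = 0) ?add0r; last first.
  apply: etrans (flow_inside S); apply: eq_bigr => u _; apply: eq_bigl => w.
  by rewrite andbC.
apply: eq_bigr => u _; apply: eq_bigl => w.
rewrite in_setD; case a: (isarc u w); rewrite ?andbF ?andbT //.
by rewrite (isarc_VH a) andbT.
Qed.

Lemma weak_duality (S : {set N}) : is_st_cut e h S ->
  ((flow_value e h f)%:E <= cut_cap e h R S)%E.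
Proof.
move=> cS; rewrite (flow_cut cS) -sumEFin /cut_cap.
apply: lee_sum => u _; rewrite -sumEFin; apply: lee_sum => w /andP[_ a].
exact: flow_le_cap.
Qed.

Definition saturates (S : {set N}) : Prop :=
  forall u w, u \in S -> w \in VH :\: S -> ~~ resarc e h f u w.

Lemma saturatesP (S : {set N}) : is_st_cut e h S ->
  saturates S <-> cut_cap e h R S = (flow_value e h f)%:E.
Proof.
move=> cS; rewrite (flow_cut cS) -sumEFin /cut_cap; split.
  move=> sat; apply: eq_bigr => u uS; rewrite -sumEFin; apply: eq_bigr => w /andP[wS a].
  have := sat u w uS wS; rewrite /resarc a /= -leNgt => le.
  by apply/le_anti; rewrite le flow_le_cap.
move=> Ecap u w uS wS; apply/negP => /andP[a lt].
suff : ((\sum_(u in S) (\sum_(w in VH :\: S | isarc u w) f u w)%:E) <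
        \sum_(u in S) \sum_(w in VH :\: S | isarc u w) cap u w)%E.
  by rewrite Ecap ltxx.
rewrite (bigD1 u) //= [X in (_ < X)%E](bigD1 u) //=.
apply: lte_leD; first by rewrite sumEFin.
- rewrite -sumEFin (bigD1 w) /=; last by rewrite wS a.
  rewrite [X in (_ < X)%E](bigD1 w) /=; last by rewrite wS a.
  apply: lte_leD => //; first by rewrite sumEFin.
  by apply: lee_sum => w' /andP[/andP[_ a'] _]; exact: flow_le_cap.
- apply: lee_sum => u' _; rewrite -sumEFin; apply: lee_sum => w' /andP[_ a'].
  exact: flow_le_cap.
Qed.

Lemma residual_slack : exists2 m : R, 0 < m &
  forall u w, resarc e h f u w -> ((f u w + m)%:E <= cap u w)%E.
Proof.
pose gap u w : R := if cap u w is r%:E then r - f u w else 1.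
have gap_pos u w : resarc e h f u w -> 0 < gap u w.
  by rewrite /resarc /gap => /andP[_]; case: (cap u w) => [r||] //; rewrite lte_fin subr_gt0.
exists (\big[Num.min/1]_(q : N * N | resarc e h f q.1 q.2) gap q.1 q.2).
  by apply: (big_ind (fun x => 0 < x)) => // [x y hx hy|q]; [rewrite lt_min hx hy|apply: gap_pos].
move=> u w uw; rewrite (bigD1 (u, w)) //=.
apply: (le_trans (_ : _ <= (f u w + gap u w)%:E)%E).
  by rewrite lee_fin lerD2l ge_min lexx.
move: uw; rewrite /resarc /gap.
case: (cap u w) => [r||] //= /andP[_ lt]; last by rewrite ltNge leNye in lt.
  by rewrite lee_fin addrC subrK.
exact: leey.
Qed.

Definition push (s : seq (N * N)) (eps : R) (u w : N) : R :=
  f u w + eps * ((count (pred1 (u, w)) s)%:R - (count (pred1 (w, u)) s)%:R).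

Lemma push_feasible (s : seq (N * N)) (eps : R) (m : R) :
  {in s, forall q, resarc e h f q.1 q.2} -> 0 <= eps -> eps * (size s)%:R <= m ->
  (forall u w, resarc e h f u w -> ((f u w + m)%:E <= cap u w)%E) ->
  forall u w, isarc u w ->
    ((push s eps u w)%:E <= cap u w)%E /\ push s eps w u = - push s eps u w.
Proof.
move=> s_res eps_ge0 eps_m slack u w a; split; last first.
  by rewrite /push (f_flow.1 u w a).2; ring.
have cnt_ge0 : 0 <= eps * (count (pred1 (w, u)) s)%:R by rewrite mulr_ge0 ?ler0n.
have [cnt0|cnt_pos] := posnP (count (pred1 (u, w)) s).
  apply: le_trans (flow_le_cap a); rewrite lee_fin /push cnt0 mulrBr; lra.
have uw_res : resarc e h f u w.
  by apply: (s_res (u, w)); rewrite -has_pred1 has_count.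
apply: le_trans (slack u w uw_res); rewrite lee_fin /push mulrBr lerD2l.
have : eps * (count (pred1 (u, w)) s)%:R <= m.
  by apply: le_trans eps_m; rewrite ler_wpM2l // ler_nat count_size.
lra.
Qed.

Lemma push_outflow (s : seq (N * N)) (eps : R) (u : N) :
  {in s, forall q, isarc q.1 q.2} ->
  \sum_(w | isarc u w) push s eps u w = \sum_(w | isarc u w) f u w +
    eps * ((count (fun q => q.1 == u) s)%:R - (count (fun q => q.2 == u) s)%:R).
Proof.
move=> s_arcs; rewrite big_split /= -mulr_sumr sumrB -!natr_sum.
rewrite (arc_count_out _ s_arcs); congr (_ + _ * (_ - _%:R)).
rewrite -(arc_count_in _ s_arcs); apply: eq_bigl => w; exact: isarc_sym.
Qed.

Lemma augment : connect (resarc e h f) Src Snk ->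
  exists g, is_flow e h g /\ flow_value e h f < flow_value e h g.
Proof.
case/connectP => p p_res p_last; set s := zip (Src :: p) p.
have s_res : {in s, forall q, resarc e h f q.1 q.2} by apply: path_zip_arcs.
have s_arcs : {in s, forall q, isarc q.1 q.2} by move=> q /s_res /andP[].
have [m m_pos slack] := residual_slack.
pose eps := m / (size s).+1%:R.
have eps_pos : 0 < eps by rewrite divr_gt0 ?ltr0Sn.
have eps_m : eps * (size s)%:R <= m.
  by rewrite /eps mulrAC ler_pdivrMr ?ltr0Sn // ler_pM2l // ler_nat.
have balance u := zip_balance Src p u; rewrite -p_last -/s in balance.
exists (push s eps); split; last first.
  rewrite /flow_value push_outflow //; have := balance Src.
  by rewrite eqxx addn0 => ->; rewrite natrD addrK mulr1 ltrDl.
split; first exact: (push_feasible s_res (ltW eps_pos) eps_m slack).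
move=> u uV us ut; rewrite push_outflow // (f_flow.2 u uV us ut) add0r.
have := balance u; rewrite eq_sym (negbTE ut) eq_sym (negbTE us) addn0 => ->.
by rewrite subrr mulr0.
Qed.

(* A maximum flow admits a saturated s-t cut: the nodes reachable from s
   in the residual graph. *)
Lemma max_flow_saturated_cut : is_max_flow e h f ->
  exists2 S, is_st_cut e h S & saturates S.
Proof.
case=> _ fmax; exists [set u in VH | connect (resarc e h f) Src u].
  split; first by apply/subsetP => u; rewrite in_set => /andP[].
    by rewrite in_set VH_Src connect0.
  apply/negP; rewrite in_set => /andP[_ /augment[g [g_flow lt]]].
  by have := fmax g g_flow; rewrite leNgt lt.
move=> u w; rewrite in_set => /andP[_ cu]; rewrite in_setD in_set => /andP[wS wV].
by apply: contra wS => uw; rewrite wV (connect_trans cu (connect1 uw)).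
Qed.
End Flow.
End Network.

Section Cuts.
Variables (R : realType) (T : finType) (e : rel T) (h : nat).
Hypothesis h_ge2 : (2 <= h)%N.
Local Notation N := (node T).
Local Notation VH := (VH e h).
Local Notation Sset := (Sset e h).
Local Notation cut_cap := (cut_cap e h R).

Lemma Sset_Vx (V1 : {set T}) (v : T) : (Vx v \in Sset V1) = (v \in V1).
Proof.
rewrite /Sset in_setU1 in_setU /=; apply/idP/idP; last by move=> vV; rewrite imset_f.
by case/orP=> [/imsetP[v' H [->]]|/imsetP[]].
Qed.

Lemma Sset_Lm (V1 : {set T}) (l : {set T}) :
  (Lm l \in Sset V1) = (l \in Lam e h) && (l \subset V1).
Proof.
rewrite /Sset in_setU1 in_setU /=; apply/idP/idP.
  by case/orP => [/imsetP[]//|/imsetP[l' + [->]]]; rewrite in_set.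
by move=> lV; rewrite [X in _ || X]imset_f ?orbT // in_set.
Qed.

Lemma Sset_cut (V1 : {set T}) : is_st_cut e h (Sset V1).
Proof.
split; last 2 first.
- by rewrite /Sset in_setU1 eqxx.
- by apply/negP; rewrite /Sset in_setU1 in_setU /=; case/orP => /imsetP[].
apply/subsetP => -[||v|l]; rewrite ?VH_Src ?VH_Vx //.
  by rewrite /Sset in_setU1 in_setU /=; case/orP => /imsetP[].
by rewrite Sset_Lm VH_Lm => /andP[].
Qed.

(* A node set is closed when it contains the members of each of its
   (h-1)-cliques, i.e. no arc of infinite capacity leaves it. *)
Definition lam_closed (S : {set N}) : bool :=
  [forall l, forall v, (Lm l \in S) && (v \in l) ==> (Vx v \in S)].

Lemma lam_closedP (S : {set N}) :
  reflect (forall l v, Lm l \in S -> v \in l -> Vx v \in S) (lam_closed S).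
Proof.
apply: (iffP forallP) => [cl l v lS vl | cl l]; last first.
  by apply/forallP => v; apply/implyP => /andP[]; apply: cl.
by have /forallP/(_ v)/implyP := cl l; apply; rewrite lS vl.
Qed.

Definition vertices (S : {set N}) : {set T} := [set v | Vx v \in S].

(* The (h-1)-cliques outside S that complete v to an h-clique: the unit
   capacity arcs leaving Vx v \in S. *)
Definition crossing_cliques (S : {set N}) (v : T) : {set {set T}} :=
  [set l in Lam e h | (Lm l \notin S) && hclique e h (v |: l)].

Lemma closed_cap (S : {set N}) : is_st_cut e h S -> lam_closed S ->
  cut_cap S = (\sum_(v in ~: vertices S) (hdeg e h v)%:R +
     \sum_(v in vertices S) (h%:R * rho_star e R h + #|crossing_cliques S v|%:R))%:E.
Proof.
case=> SV sS tS /lam_closedP cl.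
pose capR (u w : N) : R := match u, w with
  | Src, Vx v => (hdeg e h v)%:R
  | Vx _, Snk => h%:R * rho_star e R h
  | Vx v, Lm l => if hclique e h (v |: l) then 1 else 0
  | _, _ => 0 end.
have -> : cut_cap S = (\sum_(u in S) \sum_(w in VH :\: S | isarc e h u w) capR u w)%:E.
  rewrite /Defs.cut_cap -sumEFin; apply: eq_bigr => u uS; rewrite -sumEFin.
  apply: eq_bigr => w /andP[wS a].
  case: u uS a => [||v|l]; case: w wS => [||v'|l'] wS uS a //=; first by case: ifP.
  case: ifP => // vl; have := cl l v' uS vl.
  by move: wS; rewrite in_setD => /andP[/negP].
congr (_%:E).
rewrite big_mkcond node_sum /= sS (negbTE tS) addr0.
rewrite [X in _ + _ + X]big1 ?addr0; last first.
  by move=> l _; case: ifP => // _; apply: big1 => w _; case: w.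
congr (_ + _).
  rewrite big_mkcond node_sum /= [X in _ + X]big1 ?addr0; last by move=> l _; rewrite andbF.
  rewrite !andbF !add0r [RHS]big_mkcond; apply: eq_bigr => v _.
  by rewrite in_setD VH_Vx !in_set !andbT.
rewrite [RHS]big_mkcond; apply: eq_bigr => v _; rewrite in_set; case: ifP => // vS.
rewrite big_mkcond node_sum /= !in_setD sS tS VH_Snk /= add0r.
rewrite big1 ?addr0; last by move=> v' _; rewrite andbF.
congr (_ + _); rewrite -sum1_card natr_sum [RHS]big_mkcond; apply: eq_bigr => l _.
rewrite in_setD VH_Lm [l \in crossing_cliques _ _]in_set.
by case: (l \in Lam e h); case: (Lm l \in S); case: (hclique e h (v |: l));
  rewrite /= ?andbF ?orbT ?andbT ?if_same.
Qed.

Lemma Sset_closed (V1 : {set T}) : lam_closed (Sset V1).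
Proof.
by apply/lam_closedP => l v; rewrite Sset_Lm Sset_Vx => /andP[_ /subsetP lV] /lV.
Qed.

Lemma vertices_Sset (V1 : {set T}) : vertices (Sset V1) = V1.
Proof. by apply/setP => v; rewrite in_set Sset_Vx. Qed.

Definition total_deg : R := \sum_(v : T) (hdeg e h v)%:R.

Lemma Sset_cap (V1 : {set T}) : cut_cap (Sset V1) =
  (total_deg + h%:R * (#|V1|%:R * rho_star e R h - (mu e h V1)%:R))%:E.
Proof.
rewrite (closed_cap (Sset_cut V1) (Sset_closed V1)) !vertices_Sset; congr (_%:E).
rewrite [X in _ + X](eq_bigr (fun v => h%:R * rho_star e R h + #|outer_cliques e h V1 v|%:R));
  last first.
  move=> v _; congr (_ + _%:R); apply: eq_card => l.
  rewrite [l \in crossing_cliques _ _]in_set [l \in outer_cliques _ _ _ _]in_set Sset_Lm.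
  by case: (l \in Lam e h).
rewrite big_split /= sumr_const -[_ *+ #|V1|]mulr_natr.
rewrite /total_deg [\sum_v _](bigID (mem V1)) /= (deg_sum_split R e h_ge2 V1).
rewrite (eq_bigl (fun v => v \notin V1)); last by move=> v; rewrite in_setC.
ring.
Qed.

Lemma closed_cap_ge (S : {set N}) : is_st_cut e h S -> lam_closed S ->
  (cut_cap (Sset (vertices S)) <= cut_cap S)%E.
Proof.
move=> cS clS; have /lam_closedP cl := clS.
rewrite (closed_cap cS clS) (closed_cap (Sset_cut _) (Sset_closed _)) !vertices_Sset.
rewrite lee_fin lerD2l.
apply: ler_sum => v _; rewrite lerD2l ler_nat; apply: subset_leq_card.
apply/subsetP => l; rewrite [l \in crossing_cliques (Sset _) _]in_set Sset_Lm.
case/andP=> lL /andP[lV hc]; rewrite lL /= in lV; rewrite in_set lL hc andbT /=.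
apply: contra lV => lS; apply/subsetP => x xl.
by rewrite in_set (cl _ _ lS xl).
Qed.

Lemma cut_cap_ge (S : {set N}) : is_st_cut e h S -> (total_deg%:E <= cut_cap S)%E.
Proof.
move=> cS; have [SV sS tS] := cS.
have [clS|] := boolP (lam_closed S).
  apply: le_trans (closed_cap_ge cS clS); rewrite Sset_cap lee_fin lerDl.
  by rewrite mulr_ge0 ?ler0n // subr_ge0 mu_le.
case/forallPn => l /forallPn[v]; rewrite negb_imply => /andP[/andP[lS vl] vS].
have lL : l \in Lam e h by rewrite -VH_Lm (subsetP SV).
have sum_ge0 (u : N) : (0 <= \sum_(w in VH :\: S | isarc e h u w) cap e h R u w)%E.
  by apply: sume_ge0 => w _; apply: cap_ge0.
apply: le_trans (leey _) _; rewrite /Defs.cut_cap (bigD1 (Lm l)) //=.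
apply: le_trans (leeDl _ _); last by apply: sume_ge0 => u _; apply: sum_ge0.
rewrite (bigD1 (Vx v)) /=; last by rewrite in_setD VH_Vx vS lL vl.
rewrite vl; apply: le_trans (leeDl _ _) => //.
by apply: sume_ge0 => w _; exact: (cap_ge0 R e h (Lm l) w).
Qed.
End Cuts.

Section MinCuts.
Variables (R : realType) (T : finType) (e : rel T) (h : nat).
Hypothesis h_ge2 : (2 <= h)%N.
Local Notation N := (node T).
Local Notation Sset := (Sset e h).
Local Notation cut_cap := (cut_cap e h R).
Local Notation D := (total_deg R e h).

Lemma Sset0_cap : cut_cap (Sset set0) = D%:E.
Proof. by rewrite Sset_cap // mu_set0 // cards0 mul0r subrr mulr0 addr0. Qed.

Lemma min_cutP (S : {set N}) : is_st_cut e h S ->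
  is_min_cut e h R S <-> cut_cap S = D%:E.
Proof.
move=> cS; split => [[_ Smin]|capS]; last by split=> // S' cS'; rewrite capS cut_cap_ge.
apply/le_anti; rewrite cut_cap_ge // andbT -Sset0_cap.
by apply: Smin; apply: Sset_cut.
Qed.

Lemma max_flow_value (f : N -> N -> R) : is_max_flow e h f -> flow_value e h f = D.
Proof.
move=> fmax; have [f_flow _] := fmax.
have [S cS satS] := max_flow_saturated_cut f_flow fmax.
apply/le_anti/andP; split; rewrite -lee_fin.
  by have := weak_duality f_flow (Sset_cut e h set0); rewrite Sset0_cap.
by rewrite -(saturatesP f_flow cS).1 //; apply: cut_cap_ge.
Qed.

Lemma Sset_capP (V1 : {set T}) : V1 != set0 ->
  cut_cap (Sset V1) = D%:E <-> rho e R h V1 = rho_star e R h.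
Proof.
move=> V1_ne; have V1_gt0 : (0 : R) < #|V1|%:R by rewrite ltr0n card_gt0.
have h_gt0 : (0 : R) < h%:R by rewrite ltr0n; lia.
rewrite Sset_cap // /rho; split => [[capE]|rhoE].
  have /eqP : h%:R * (#|V1|%:R * rho_star e R h - (mu e h V1)%:R) = 0 by lra.
  rewrite mulf_eq0 gt_eqF //= subr_eq0 => /eqP <-.
  by rewrite mulrC mulKf // gt_eqF.
rewrite -rhoE [_ * (_ / _)]mulrC divfK ?gt_eqF //.
by rewrite subrr mulr0 addr0.
Qed.
End MinCuts.

Theorem lemma3 (R : realType) (T : finType) (e : rel T)
  (e_sym : symmetric e) (e_irr : irreflexive e) (h : nat) (h_ge2 : (2 <= h)%N)
  (f : node T -> node T -> R) (fmax : is_max_flow e h f)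
  (V1 : {set T}) (V1_ne : V1 != set0) :
  [<-> rho e R h V1 = rho_star e R h;
       is_min_cut e h R (Sset e h V1);
       forall u w, u \in Sset e h V1 -> w \in VH e h :\: Sset e h V1 ->
         ~~ resarc e h f u w].
Proof.
have cS := Sset_cut e h V1.
have densest := Sset_capP R e h_ge2 V1_ne.
have min_cut := min_cutP R h_ge2 cS.
have saturated := saturatesP fmax.1 cS.
rewrite (max_flow_value h_ge2 fmax) in saturated.
tfae=> [dense | Smin | sat].
- by apply/min_cut/densest.
- by apply/saturated/min_cut.
- by apply/densest/saturated.
Qed.
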